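(* Let $F=\mathbb{Q}$ or $F=\mathbb{Q}(\sqrt{-d})$ for some square-free positive integer $d$, regarded as a subfield of $\mathbb{C}$, with ring of integers $\mathcal{O}_F$. Let $\mathfrak{p}$ be a nonzero prime ideal of $\mathcal{O}_F$, let $\pi\in F$ with $v_\mathfrak{p}(\pi)=1$, and let $b\in\mathcal{O}_F$ be not a square modulo $\mathfrak{p}$, so that $Q=(\pi,b)_F$ is a division algebra. Fix a complex square root $\sqrt{\pi}$ of $\pi$ (so $K=F(\sqrt{\pi})$ is a maximal commutative subfield of $Q$) and consider the codebook $$\mathcal{C}(Q)=\left\{\begin{bmatrix}\alpha+\beta\sqrt{\pi} & \gamma+\delta\sqrt{\pi}\\ b(\gamma-\delta\sqrt{\pi}) & \alpha-\beta\sqrt{\pi}\end{bmatrix}\;\middle|\;\alpha,\beta,\gamma,\delta\in\mathcal{O}_F\right\}\subset M_2(\mathbb{C}).$$ Then $\mathcal{C}(Q)$ satisfies the non-vanishing determinant criterion, i.e. $\inf_{0\neq X\in\mathcal{C}(Q)}|\det X|^2>0$.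
   Context: $v_\mathfrak{p}$ is the $\mathfrak{p}$-adic valuation on $F$. For $a,b\in F^\times$, $(a,b)_F$ is the $F$-algebra with basis $1,\mathbf i,\mathbf j,\mathbf k$ and relations $\mathbf i^2=a$, $\mathbf j^2=b$, $\mathbf i\mathbf j=-\mathbf j\mathbf i=\mathbf k$. The non-vanishing determinant (NVD) criterion for an infinite codebook $\mathcal{C}$ of square complex matrices means that the minimum determinant $\inf_{0\neq X\in\mathcal{C}}|\det X|^2$ is strictly positive. *)

From HB Require Import structures.
From mathcomp Require Import all_boot all_order all_algebra all_field.
Set Implicit Arguments. Unset Strict Implicit. Unset Printing Implicit Defensive.
Import Order.TTheory GRing.Theory Num.Theory.
Local Open Scope ring_scope.

(* The ambient "C": algC, the algebraic complex numbers (all quantities here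
   are algebraic, so this is a faithful stand-in for C). *)

Definition squarefree_nat (d : nat) : Prop :=
  forall p : nat, prime p -> ~~ (p * p %| d)%N.

(* The base field F as a subset of algC:
   oF = None      : F = Q
   oF = Some d    : F = Q(sqrt(-d)), with sqrt(-d) = sqrtC (-d). *)
Definition inF (oF : option nat) (x : algC) : Prop :=
  match oF with
  | None => exists a : rat, x = ratr a
  | Some d => exists a b : rat, x = ratr a + ratr b * sqrtC (- (d%:R))
  end.

Definition admissible_field (oF : option nat) : Prop :=
  match oF with
  | None => True
  | Some d => (0 < d)%N /\ squarefree_nat d
  end.

Definition inOF (oF : option nat) (x : algC) : Prop := inF oF x /\ x \in Aint.

Definition nonzero_prime_ideal (oF : option nat) (P : algC -> Prop) : Prop :=
  (forall x, P x -> inOF oF x) /\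
  P 0 /\
  (forall x y, P x -> P y -> P (x + y)) /\
  (forall r x, inOF oF r -> P x -> P (r * x)) /\
  ~ P 1 /\
  (forall x y, inOF oF x -> inOF oF y -> P (x * y) -> P x \/ P y) /\
  (exists x, P x /\ x <> 0).

Fixpoint ideal_pow (oF : option nat) (P : algC -> Prop) (n : nat) : algC -> Prop :=
  match n with
  | 0%N => inOF oF
  | n'.+1 => fun x => exists s : seq (algC * algC),
      (forall q, q \in s -> ideal_pow oF P n' q.1 /\ P q.2) /\
      x = \sum_(q <- s) q.1 * q.2
  end.

(* v_P(x) = n (n >= 0) for x in F: x lies in P^n O_(P) but not in P^(n+1) O_(P),
   where O_(P) = { a/s : a in O_F, s in O_F \ P } is the localization. *)
Definition pval_eq (oF : option nat) (P : algC -> Prop) (x : algC) (n : nat) : Prop :=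
  inF oF x /\
  (exists s, inOF oF s /\ ~ P s /\ ideal_pow oF P n (s * x)) /\
  (forall s, inOF oF s -> ~ P s -> ~ ideal_pow oF P n.+1 (s * x)).

Definition nonsquare_mod (oF : option nat) (P : algC -> Prop) (b : algC) : Prop :=
  ~ exists y, inOF oF y /\ P (y ^+ 2 - b).

Definition codeword (pi_sqrt b al be ga de : algC) : 'M[algC]_2 :=
  \matrix_(i < 2, j < 2)
    if (i == 0) && (j == 0) then al + be * pi_sqrt
    else if (i == 0) then ga + de * pi_sqrt
    else if (j == 0) then b * (ga - de * pi_sqrt)
    else al - be * pi_sqrt.

From HB Require Import structures.
From mathcomp Require Import all_boot all_order all_algebra all_field.
From mathcomp Require Import ring zify.
From Stdlib Require Import Classical.
Import Order.TTheory GRing.Theory Num.Theory.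
Set Implicit Arguments. Unset Strict Implicit. Unset Printing Implicit Defensive.
Local Open Scope ring_scope.

(* The determinant of a codeword is the reduced norm [nrd] of
   [al + be i + ga j + de k].  If it vanished at a nonzero integral point, then, [b] being a non-square
   mod [P] and [v_P(pi)] being 1, all four coordinates would lie in [P];
   rescaling by a suitable [lam] in [F] ([c^*/p] or [1/p], where [p] is the
   rational prime under [P]) keeps them integral while lowering the [p]-adic
   valuation of the norm of a nonzero coordinate: an infinite descent.
   Hence [nrd] does not vanish, and for [s] in [O_F \ P] with [s pi]
   integral, [s^2 nrd] is a nonzero integer of [F], whose squared modulus is
   a positive rational integer; so [|det|^2 >= |s|^-4]. *)

Lemma conjC_sqrtCN (x : algC) : 0 <= x -> (sqrtC (- x))^* = - sqrtC (- x).
Proof.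
move=> x_ge0; set w := sqrtC (- x).
have w2 : w ^+ 2 = - x by exact: sqrtCK.
have : (w^* - w) * (w^* + w) = 0.
  by rewrite -subr_sqr -rmorphXn w2 rmorphN /= (conj_Creal (ger0_real x_ge0)) subrr.
move/eqP; rewrite mulf_eq0 => /orP[|]; last by rewrite addr_eq0 => /eqP.
rewrite subr_eq0 => /eqP wR.
have : 0 <= w ^+ 2 by rewrite real_exprn_even_ge0 // CrealE wR.
rewrite w2 oppr_ge0 => x_le0.
have -> : w = 0 by rewrite /w (@le_anti _ _ x 0) ?x_le0 // oppr0 sqrtC0.
by rewrite rmorph0 oppr0.
Qed.

Section NumberField.
Variable oF : option nat.

Lemma inF_ratr q : inF oF (ratr q).
Proof. by case: oF => [d|] /=; [exists q, 0; rewrite rmorph0 mul0r addr0 | exists q]. Qed.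

Lemma inFD x y : inF oF x -> inF oF y -> inF oF (x + y).
Proof.
case: oF => [d|] /=; last by move=> [a ->] [a' ->]; exists (a + a'); rewrite rmorphD.
move=> [a [b ->]] [a' [b' ->]]; exists (a + a'), (b + b'); rewrite !rmorphD /=; ring.
Qed.

Lemma inFN x : inF oF x -> inF oF (- x).
Proof.
case: oF => [d|] /=; last by move=> [a ->]; exists (- a); rewrite rmorphN.
move=> [a [b ->]]; exists (- a), (- b); rewrite !rmorphN /=; ring.
Qed.

Lemma inFM x y : inF oF x -> inF oF y -> inF oF (x * y).
Proof.
case: oF => [d|] /=; last by move=> [a ->] [a' ->]; exists (a * a'); rewrite rmorphM.
move=> [a [b ->]] [a' [b' ->]].
exists (a * a' - d%:R * b * b'), (a * b' + a' * b).
set w := sqrtC _; have dE : d%:R = - w ^+ 2 by rewrite sqrtCK opprK.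
by rewrite !(rmorphD, rmorphN, rmorphM) /= ratr_nat dE; ring.
Qed.

Lemma inF_conj x : inF oF x -> inF oF x^*.
Proof.
case: oF => [d|] /=; last by move=> [a ->]; exists a; rewrite fmorph_rat.
move=> [a [b ->]]; exists a, (- b).
by rewrite rmorphD fmorph_rat rmorphM fmorph_rat /= conjC_sqrtCN ?ler0n // rmorphN mulrN mulNr.
Qed.

Lemma inF_norm_rat x : inF oF x -> x * x^* \in Crat.
Proof.
case: oF => [d|] /=; last by move=> [a ->]; rewrite fmorph_rat -rmorphM Crat_rat.
move=> [a [b ->]].
rewrite rmorphD fmorph_rat rmorphM fmorph_rat /= conjC_sqrtCN ?ler0n //.
set w := sqrtC _; have dE : d%:R = - w ^+ 2 by rewrite sqrtCK opprK.
have -> : (ratr a + ratr b * w) * (ratr a + ratr b * - w) = ratr (a ^+ 2 + b ^+ 2 * d%:R).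
  by rewrite rmorphD rmorphM !rmorphXn rmorph_nat dE; ring.
exact: Crat_rat.
Qed.

Lemma inF_invn n : inF oF (n%:R)^-1.
Proof. by rewrite -(ratr_nat algC n) -fmorphV; apply: inF_ratr. Qed.

Lemma inOFD x y : inOF oF x -> inOF oF y -> inOF oF (x + y).
Proof. by move=> [? ?] [? ?]; split; [apply: inFD | apply: rpredD]. Qed.

Lemma inOFN x : inOF oF x -> inOF oF (- x).
Proof. by move=> [? ?]; split; [apply: inFN | rewrite rpredN]. Qed.

Lemma inOFM x y : inOF oF x -> inOF oF y -> inOF oF (x * y).
Proof. by move=> [? ?] [? ?]; split; [apply: inFM | apply: rpredM]. Qed.

Lemma inOF_nat n : inOF oF n%:R.
Proof. by split; [rewrite -(ratr_nat algC n); apply: inF_ratr | apply: rpred_nat]. Qed.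

Lemma inOF1 : inOF oF 1.
Proof. exact: inOF_nat 1. Qed.

Lemma inOFX x n : inOF oF x -> inOF oF (x ^+ n).
Proof. by move=> x_OF; elim: n => [|n IHn]; rewrite ?expr0 ?exprS; auto using inOF1, inOFM. Qed.

Lemma inOF_conj x : inOF oF x -> inOF oF x^*.
Proof. by move=> [? ?]; split; [apply: inF_conj | rewrite (Aint_aut Num.conj)]. Qed.

Lemma inOF_norm_nat x : inOF oF x -> x * x^* \is a Num.nat.
Proof.
move=> x_OF; have [_ xx_A] := inOFM x_OF (inOF_conj x_OF).
have := Cint_rat_Aint (inF_norm_rat (proj1 x_OF)) xx_A.
by rewrite -(intrEge0 (mul_conjC_ge0 x)).
Qed.

(* [z] is a root of the monic [X^2 - (z + z^* ) X + z z^* ]. *)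
Lemma inOF_trace_norm z :
  inF oF z -> z + z^* \is a Num.int -> z * z^* \is a Num.int -> inOF oF z.
Proof.
move=> z_F tr_Z nm_Z; split => //.
pose r : {poly algC} := (- (z + z^*))%:P * 'X + (z * z^*)%:P.
pose q := 'X^2 + r.
have q_monic : q \is monic.
  rewrite monicE lead_coefDl ?lead_coefXn // size_polyXn /r size_MXaddC.
  by case: ifP => // _; rewrite size_polyC; case: (_ != 0).
apply: (root_monic_Aint (p := q)) q_monic _.
  by rewrite /root /q hornerD hornerXn /r hornerMXaddC !hornerC; apply/eqP; ring.
apply/polyOverP => i; rewrite /q /r !coefD coefXn coefMX !coefC.
by rewrite !rpredD ?rpred_nat //; do !case: ifP => _; rewrite ?rpred0 ?rpredN.
Qed.

Definition normn (x : algC) : nat := Num.truncn (x * x^*).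

Lemma normnE x : inOF oF x -> (normn x)%:R = x * x^*.
Proof. by move=> x_OF; rewrite truncnK // inOF_norm_nat. Qed.

Lemma normn_gt0 x : inOF oF x -> x != 0 -> (0 < normn x)%N.
Proof.
by move=> x_OF x_neq0; rewrite -(ltr0n algC) normnE // -normCK exprn_gt0 ?normr_gt0.
Qed.

Lemma normn_divn d x : inOF oF x -> (0 < d)%N -> (d %| normn x)%N ->
  x * x^* / d%:R = (normn x %/ d)%:R.
Proof. by move=> x_OF d_gt0 d_dvd; rewrite natr_div ?normnE // unitfE pnatr_eq0 -lt0n. Qed.

Lemma inOF_normnE z k : inF oF z -> z + z^* \is a Num.int -> z * z^* = k%:R ->
  inOF oF z /\ normn z = k.
Proof.
move=> z_F tr_Z nmE; split; last by rewrite /normn nmE natrK.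
by apply: inOF_trace_norm => //; rewrite nmE rpred_nat.
Qed.

Lemma normC_ge1 x : inOF oF x -> x != 0 -> 1 <= `|x| ^+ 2.
Proof. by move=> x_OF x_neq0; rewrite normCK -normnE // ler1n normn_gt0. Qed.

End NumberField.

Create HintDb inOF.
#[global] Hint Resolve inOFD inOFN inOFM inOF_nat inOF1 inOFX inOF_conj : inOF.

(* The reduced norm of [al + be i + ga j + de k] in [(pi, b)_F]. *)
Definition nrd (pi b al be ga de : algC) : algC :=
  al ^+ 2 - b * ga ^+ 2 - pi * (be ^+ 2 - b * de ^+ 2).

Lemma det_codeword s b al be ga de :
  \det (codeword s b al be ga de) = nrd (s ^+ 2) b al be ga de.
Proof.
rewrite (expand_det_row _ 0) !big_ord_recr big_ord0 /= add0r /cofactor !det_mx11 !mxE /=.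
by rewrite /nrd !add0n expr0 expr1; ring.
Qed.

Lemma nrdZ lam pi b al be ga de :
  nrd pi b (lam * al) (lam * be) (lam * ga) (lam * de) = lam ^+ 2 * nrd pi b al be ga de.
Proof. by rewrite /nrd; ring. Qed.

Lemma codeword0 s b : codeword s b 0 0 0 0 = 0.
Proof. by apply/matrixP => i j; rewrite !mxE !(mul0r, mulr0, subr0, addr0) !if_same. Qed.

Lemma no_infinite_descent (T : Type) (S : T -> Prop) (g : T -> T) (f : T -> nat) :
  (forall x, S x -> S (g x) /\ (f (g x) < f x)%N) -> forall x, ~ S x.
Proof.
move=> descent x; move: {2}(f x) (leqnn (f x)) => n.
elim: n x => [|n IHn] x f_le Sx; have [Sgx lt_f] := descent x Sx.
  by have := leq_trans lt_f f_le.
by apply: (IHn (g x)) Sgx; rewrite -ltnS (leq_trans lt_f).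
Qed.

Section PrimeIdeal.
Variables (oF : option nat) (P : algC -> Prop).
Hypothesis P_prime : nonzero_prime_ideal oF P.

Lemma ideal_inOF x : P x -> inOF oF x.
Proof. by case: P_prime => sub _; apply: sub. Qed.

Lemma ideal0 : P 0.
Proof. by case: P_prime => _ []. Qed.

Lemma idealD x y : P x -> P y -> P (x + y).
Proof. by case: P_prime => _ [_ [add _]]; apply: add. Qed.

Lemma idealMl r x : inOF oF r -> P x -> P (r * x).
Proof. by case: P_prime => _ [_ [_ [mul _]]]; apply: mul. Qed.

Lemma idealMr r x : inOF oF r -> P x -> P (x * r).
Proof. by rewrite mulrC; apply: idealMl. Qed.

Lemma ideal1 : ~ P 1.
Proof. by case: P_prime => _ [_ [_ [_ []]]]. Qed.

Lemma idealM_prime x y : inOF oF x -> inOF oF y -> P (x * y) -> P x \/ P y.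
Proof. by case: P_prime => _ [_ [_ [_ [_ [prime _]]]]]; apply: prime. Qed.

Lemma idealN x : P x -> P (- x).
Proof. by rewrite -mulN1r; apply: idealMl; auto with inOF. Qed.

Lemma idealB x y : P x -> P y -> P (x - y).
Proof. by move=> Px Py; apply: idealD => //; apply: idealN. Qed.

Lemma ideal_normC x : P x -> P (x * x^*).
Proof. by move=> Px; apply: idealMr => //; apply/inOF_conj/ideal_inOF. Qed.

Lemma ideal_pow1 x : ideal_pow oF P 1 x -> P x.
Proof.
move=> [s [s_in ->]]; elim: s s_in => [|[y z] s IHs] s_in; first by rewrite big_nil; apply: ideal0.
rewrite big_cons; have [/= y_OF Pz] := s_in _ (mem_head _ _).
by apply: idealD; [apply: idealMl | apply: IHs => q q_s; apply: s_in; rewrite inE q_s orbT].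
Qed.

Lemma ideal_pow2_add x1 y1 x2 y2 : P x1 -> P y1 -> P x2 -> P y2 ->
  ideal_pow oF P 2 (x1 * y1 + x2 * y2).
Proof.
have ideal_pow1_in x : P x -> ideal_pow oF P 1 x.
  move=> Px; exists [:: (1, x)]; rewrite big_seq1 mul1r; split => // q.
  by rewrite inE => /eqP -> /=; split; auto with inOF.
move=> Px1 Py1 Px2 Py2; exists [:: (x1, y1); (x2, y2)].
split; last by rewrite big_cons big_seq1.
by move=> q; rewrite !inE => /orP[] /eqP ->; split => //; apply: ideal_pow1_in.
Qed.

Lemma ideal_nat_prime_factor n : P n%:R -> (0 < n)%N -> exists2 p, prime p & P p%:R.
Proof.
elim/ltn_ind: n => n IHn Pn n_gt0.
have n_gt1 : (1 < n)%N by case: n n_gt0 Pn {IHn} => [|[|]] // _; rewrite mulr1n => /ideal1.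
have [P_pdiv | P_quot] : P (pdiv n)%:R \/ P (n %/ pdiv n)%:R.
- apply: idealM_prime; [exact: inOF_nat | exact: inOF_nat |].
  by rewrite -natrM mulnC divnK ?pdiv_dvd.
- by exists (pdiv n); first exact: pdiv_prime.
apply: IHn P_quot _; last by rewrite divn_gt0 ?pdiv_gt0 // dvdn_leq ?pdiv_dvd // ltnW.
by rewrite ltn_Pdiv // prime_gt1 // pdiv_prime.
Qed.

Lemma ideal_has_prime : exists2 p, prime p & P p%:R.
Proof.
have [_ [_ [_ [_ [_ [_ [x [Px x_neq0]]]]]]]] := P_prime.
have x_OF := ideal_inOF Px; apply: (ideal_nat_prime_factor (n := normn x)).
  by rewrite (normnE x_OF); apply: ideal_normC.
by rewrite (normn_gt0 x_OF); apply/eqP.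
Qed.

Lemma normn_notin_ideal x : inOF oF x -> ~ P x -> ~ P x^* -> ~ P (normn x)%:R.
Proof. by move=> x_OF x_notin xc_notin; rewrite (normnE x_OF) => /(idealM_prime x_OF (inOF_conj x_OF))[]. Qed.

Section RationalPrime.
Variable p : nat.
Hypotheses (p_pr : prime p) (Pp : P p%:R).

Lemma ideal_nat_inv m : ~~ (p %| m)%N -> exists k, P ((k * m)%:R - 1).
Proof.
move=> p_ndvd; have m_gt0 : (0 < m)%N by case: m p_ndvd; rewrite ?dvdn0.
have [k j kmE _] := egcdnP p m_gt0.
have /eqP gcd1 : coprime m p by rewrite coprime_sym prime_coprime.
by exists k; rewrite kmE gcd1 natrD addrK natrM; apply: idealMl; first exact: inOF_nat.
Qed.

Lemma ideal_natE m : P m%:R <-> (p %| m)%N.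
Proof.
split; last by move=> /dvdnP[k ->]; rewrite natrM; apply: idealMl; first exact: inOF_nat.
move=> Pm; apply/negPn/negP => /ideal_nat_inv[k Pk]; apply: ideal1.
rewrite -(subKr ((k * m)%:R) 1); apply: idealB Pk.
by rewrite natrM; apply: idealMl; first exact: inOF_nat.
Qed.

Lemma ideal_invP u v m : inOF oF v -> P (u * v - m%:R) -> ~ P m%:R ->
  exists2 c, inOF oF c & P (u * c - 1).
Proof.
move=> v_OF uv_m /ideal_natE/negP/ideal_nat_inv[k Pk]; exists (k%:R * v); auto with inOF.
rewrite (_ : _ - 1 = k%:R * (u * v - m%:R) + ((k * m)%:R - 1)); last by rewrite natrM; ring.
by apply: idealD => //; apply: idealMl; first exact: inOF_nat.
Qed.

Lemma ideal_inv u : inOF oF u -> ~ P u -> exists2 c, inOF oF c & P (u * c - 1).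
Proof.
move=> u_OF u_notin; have [Puc | uc_notin] := classic (P u^*); last first.
  apply: (ideal_invP (v := u^*) (m := normn u)); auto with inOF.
    by rewrite (normnE u_OF) subrr; apply: ideal0.
  exact: normn_notin_ideal.
set T := u + u^*; have T_OF : inOF oF T by rewrite /T; auto with inOF.
have Tc : T^* = T by rewrite /T rmorphD /= conjCK addrC.
have T_notin : ~ P T by move=> PT; apply: u_notin; rewrite -(addrK u^* u); apply: idealB.
apply: (ideal_invP (v := T) (m := normn T)) => //; last by apply: normn_notin_ideal; rewrite ?Tc.
rewrite (normnE T_OF) Tc (_ : _ - _ = - (T * u^*)); last by rewrite /T; ring.
by apply/idealN/idealMl.
Qed.

Lemma ideal_norm_form b x y : inOF oF b -> nonsquare_mod oF P b ->
  inOF oF x -> inOF oF y -> P (x ^+ 2 - b * y ^+ 2) -> P x /\ P y.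
Proof.
move=> b_OF b_nsq x_OF y_OF Pxy.
have Py : P y.
  apply: NNPP => /(ideal_inv y_OF)[c c_OF Pyc]; apply: b_nsq.
  exists (x * c); split; first by auto with inOF.
  rewrite (_ : _ - b = c ^+ 2 * (x ^+ 2 - b * y ^+ 2) + b * (y * c + 1) * (y * c - 1)).
    by apply: idealD; apply: idealMl; auto with inOF.
  by ring.
split => //; suff : P (x * x) by case/idealM_prime.
rewrite (_ : x * x = (x ^+ 2 - b * y ^+ 2) + b * y * y); last by ring.
by apply: idealD => //; apply: idealMl; auto with inOF.
Qed.

(* With [s] prime to [P] and [s pi] in [P]: [s X = (s pi) U] puts [X], hence
   [al] and [ga], in [P]; then [s U pi = s X] lies in [P^2], and [v_P(pi) = 1]
   forces [U] into [P]. *)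
Lemma nrd_eq0_ideal b pi al be ga de : inOF oF b -> nonsquare_mod oF P b ->
  pval_eq oF P pi 1 -> inOF oF al -> inOF oF be -> inOF oF ga -> inOF oF de ->
  nrd pi b al be ga de = 0 -> [/\ P al, P be, P ga & P de].
Proof.
move=> b_OF b_nsq [_ [[s [s_OF [s_notin /ideal_pow1 Pspi]]] pi_val2]] al_OF be_OF ga_OF de_OF.
rewrite /nrd; set X := al ^+ 2 - _; set U := be ^+ 2 - _ => /eqP; rewrite subr_eq0 => /eqP XE.
have X_OF : inOF oF X by rewrite /X; auto with inOF.
have U_OF : inOF oF U by rewrite /U; auto with inOF.
have PX : P X.
  have : P (s * X) by rewrite XE mulrA; apply: idealMr.
  by case/idealM_prime.
have [Pal Pga] := ideal_norm_form b_OF b_nsq al_OF ga_OF PX.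
have PU : P U.
  apply: NNPP => U_notin; apply: (pi_val2 (s * U)); auto with inOF.
    by case/idealM_prime.
  rewrite (_ : s * U * pi = s * al * al + - (s * b * ga) * ga).
    by apply: ideal_pow2_add => //; [apply: idealMl | apply/idealN/idealMl]; auto with inOF.
  by rewrite mulrAC -mulrA -XE /X; ring.
have [Pbe Pde] := ideal_norm_form b_OF b_nsq be_OF de_OF PU.
by split.
Qed.

Lemma dvdn_normn x : P x -> (p %| normn x)%N.
Proof. by move=> Px; apply/ideal_natE; rewrite (normnE (ideal_inOF Px)); apply: ideal_normC. Qed.

Lemma normn_divp x : P x -> x * x^* / p%:R = (normn x %/ p)%:R.
Proof. by move=> Px; rewrite (normn_divn (ideal_inOF Px)) ?prime_gt0 ?dvdn_normn. Qed.

Let conj_invp : ((p%:R)^-1 : algC)^* = (p%:R)^-1.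
Proof. by rewrite conj_Crat // rpredV rpred_nat. Qed.

Lemma descent_conj_divp c x : P c -> P x ->
  inOF oF (c^* / p%:R * x) /\ normn (c^* / p%:R * x) = (normn c %/ p * (normn x %/ p))%N.
Proof.
move=> Pc Px; have c_OF := ideal_inOF Pc; have x_OF := ideal_inOF Px.
have zc : (c^* / p%:R * x)^* = c / p%:R * x^* by rewrite !rmorphM /= conjCK conj_invp.
apply: inOF_normnE.
- by apply: inFM; [apply: inFM; [apply/inF_conj/(proj1 c_OF) | apply: inF_invn] | case: x_OF].
- rewrite zc (_ : _ + _ = (c + x) * (c + x)^* / p%:R - c * c^* / p%:R - x * x^* / p%:R).
    rewrite (normn_divp (idealD Pc Px)) !normn_divp //.
    by apply: rpredB; first apply: rpredB; apply: rpred_nat.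
  by rewrite rmorphD; ring.
- rewrite zc natrM -!normn_divp //; ring.
Qed.

Lemma descent_invp x : (forall y, P y -> (p ^ 2 %| normn y)%N) -> P x ->
  inOF oF ((p%:R)^-1 * x) /\ normn ((p%:R)^-1 * x) = (normn x %/ p ^ 2)%N.
Proof.
move=> P_dvd Px; have x_OF := ideal_inOF Px.
have p2_gt0 : (0 < p ^ 2)%N by rewrite expn_gt0 prime_gt0.
have normn_divp2 y : P y -> y * y^* / p%:R ^+ 2 = (normn y %/ p ^ 2)%:R.
  by move=> Py; rewrite -natrX (normn_divn (ideal_inOF Py)) ?P_dvd.
have zc : ((p%:R)^-1 * x)^* = (p%:R)^-1 * x^* by rewrite rmorphM /= conj_invp.
have p_neq0 : p%:R != 0 :> algC by rewrite pnatr_eq0 -lt0n prime_gt0.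
apply: inOF_normnE.
- by apply: inFM; [apply: inF_invn | case: x_OF].
- rewrite zc (_ : _ + _ = (x + p%:R) * (x + p%:R)^* / p%:R ^+ 2 - x * x^* / p%:R ^+ 2 - 1).
    rewrite (normn_divp2 _ (idealD Px Pp)) (normn_divp2 _ Px).
    by apply: rpredB; [apply: rpredB; apply: rpred_nat | apply: rpred1].
  by rewrite rmorphD /= conjC_nat; field.
- by rewrite zc -normn_divp2 //; field.
Qed.

(* If some [c] in [P] has a norm of [p]-valuation exactly 1, then [c^*/p]
   works; otherwise all norms of [P] are divisible by [p^2] and [1/p] does. *)
Lemma descent_multiplier : exists2 lam : algC, lam != 0 & forall x, P x ->
  inOF oF (lam * x) /\ (x != 0 -> (logn p (normn (lam * x)%R) < logn p (normn x))%N).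
Proof.
have p_gt0 := prime_gt0 p_pr.
have logn_normn_gt0 x : P x -> x != 0 -> (0 < logn p (normn x))%N.
  by move=> Px x_neq0; rewrite logn_gt0 mem_primes p_pr (normn_gt0 (ideal_inOF Px)) ?dvdn_normn.
have [[c Pc c_ndvd] | all_dvd] := classic (exists2 c, P c & ~~ (p ^ 2 %| normn c)%N).
  have cp_ndvd : ~~ (p %| normn c %/ p)%N by rewrite dvdn_divRL ?dvdn_normn // mulnn.
  exists (c^* / p%:R).
    rewrite mulf_neq0 ?invr_eq0 ?conjC_eq0 ?pnatr_eq0 -?lt0n //.
    by apply: contraNneq c_ndvd => ->; rewrite /normn rmorph0 mulr0 truncn0 dvdn0.
  move=> x Px; have [z_OF ->] := descent_conj_divp Pc Px; split => // x_neq0.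
  rewrite logn_Gauss ?prime_coprime // logn_div ?dvdn_normn // (logn_prime p p_pr) eqxx.
  by have := logn_normn_gt0 x Px x_neq0; lia.
have {}all_dvd y : P y -> (p ^ 2 %| normn y)%N.
  by move=> Py; apply/negPn/negP => y_ndvd; apply: all_dvd; exists y.
exists (p%:R)^-1; first by rewrite invr_eq0 pnatr_eq0 -lt0n.
move=> x Px; have [z_OF ->] := descent_invp all_dvd Px; split => // x_neq0.
rewrite logn_div ?all_dvd // pfactorK //.
by have := logn_normn_gt0 x Px x_neq0; lia.
Qed.

End RationalPrime.

Lemma nrd_eq0 b pi : inOF oF b -> nonsquare_mod oF P b -> pval_eq oF P pi 1 ->
  forall al be ga de, inOF oF al -> inOF oF be -> inOF oF ga -> inOF oF de ->
  nrd pi b al be ga de = 0 -> [/\ al = 0, be = 0, ga = 0 & de = 0].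
Proof.
move=> b_OF b_nsq pi_val.
have [p p_pr Pp] := ideal_has_prime.
have [lam lam_neq0 lam_desc] := descent_multiplier p_pr Pp.
pose Q al be ga de :=
  [/\ inOF oF al, inOF oF be, inOF oF ga, inOF oF de & nrd pi b al be ga de = 0].
pose S z := z != 0 /\ exists al be ga de, Q al be ga de /\ z \in [:: al; be; ga; de].
have S_empty z : ~ S z.
  apply: (no_infinite_descent (g := fun z => lam * z) (f := fun z => logn p (normn z))).
  move=> {}z [z_neq0 [al [be [ga [de [[al_OF be_OF ga_OF de_OF nrd0] z_in]]]]]].
  have [Pal Pbe Pga Pde] := nrd_eq0_ideal p_pr Pp b_OF b_nsq pi_val al_OF be_OF ga_OF de_OF nrd0.
  have Pz : P z by move: z_in; rewrite !inE => /or4P[] /eqP ->.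
  split; last exact: (proj2 (lam_desc z Pz) z_neq0).
  split; first by rewrite mulf_neq0.
  exists (lam * al), (lam * be), (lam * ga), (lam * de); split; last exact: (map_f _ z_in).
  by split; rewrite ?nrdZ ?nrd0 ?mulr0 //; apply: (proj1 (lam_desc _ _)).
move=> al be ga de al_OF be_OF ga_OF de_OF nrd0.
have zero z : z \in [:: al; be; ga; de] -> z = 0.
  move=> z_in; apply/eqP; apply: contraT => z_neq0; exfalso; apply: (S_empty z).
  by split=> //; exists al, be, ga, de.
by split; apply: zero; rewrite !inE eqxx ?orbT.
Qed.

End PrimeIdeal.

Theorem theorem7p3 (oF : option nat) (P : algC -> Prop) (pi b sqpi : algC) :
  admissible_field oF ->
  nonzero_prime_ideal oF P ->
  pval_eq oF P pi 1 ->
  inOF oF b ->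
  nonsquare_mod oF P b ->
  sqpi ^+ 2 = pi ->
  exists c : algC, 0 < c /\
    forall al be ga de : algC,
      inOF oF al -> inOF oF be -> inOF oF ga -> inOF oF de ->
      codeword sqpi b al be ga de <> 0 ->
      c <= `|\det (codeword sqpi b al be ga de)| ^+ 2.
Proof.
move=> _ P_prime pi_val b_OF b_nsq sqpiE.
have [_ [[s [s_OF [s_notin /(ideal_pow1 P_prime)/(ideal_inOF P_prime) spi_OF]]] _]] := pi_val.
have s_neq0 : s != 0 by apply: contra_notN s_notin => /eqP ->; apply: ideal0 P_prime.
have s4_gt0 : 0 < `|s| ^+ 4 by rewrite exprn_gt0 ?normr_gt0.
exists (`|s| ^+ 4)^-1; split; first by rewrite invr_gt0.
move=> al be ga de al_OF be_OF ga_OF de_OF cw_neq0; rewrite det_codeword sqpiE.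
have nrd_neq0 : nrd pi b al be ga de != 0.
  apply/eqP => /(nrd_eq0 P_prime b_OF b_nsq pi_val al_OF be_OF ga_OF de_OF)[al0 be0 ga0 de0].
  by rewrite al0 be0 ga0 de0 codeword0 in cw_neq0.
have D_OF : inOF oF (s ^+ 2 * nrd pi b al be ga de).
  rewrite (_ : _ * _ = s ^+ 2 * (al ^+ 2 - b * ga ^+ 2) - s * pi * s * (be ^+ 2 - b * de ^+ 2)).
    by auto 8 with inOF.
  by rewrite /nrd; ring.
have := normC_ge1 D_OF (mulf_neq0 (expf_neq0 2 s_neq0) nrd_neq0).
rewrite normrM normrX exprMn -exprM => D_ge1.
by rewrite -(ler_pM2l s4_gt0) mulfV ?gt_eqF.
Qed.
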